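(* Fix $N\ge 2$. For each integer $E$ with $1\le E\le N(N-1)$, let $m(E)$ be the minimum of the graph entropy $\mathrm{H}_{\mathcal G}[\mathbf Z]$ over all directed graphs without self-loops on $N$ nodes with exactly $E$ edges. Then $m$ is nondecreasing: if $1\le E_1\le E_2\le N(N-1)$ then $m(E_1)\le m(E_2)$. That is, given the number of nodes, a graph with fewer edges has a smaller (or equal) lower bound of graph entropy.
   Context: A directed graph on $N\ge 2$ nodes without self-loops is encoded by a zero-diagonal binary matrix $\mathbf Z=(z_{ij})\in\{0,1\}^{N\times N}$, with $z_{ij}=1$ meaning a directed edge $(i,j)$. The in-degree of node $j$ is $d_j=\sum_{i=1}^N z_{ij}$, and the number of edges is $|\mathcal E|=\sum_{i\ne j} z_{ij}$. For $|\mathcal E|\ge 1$, the graph entropy is $$\mathrm{H}_{\mathcal G}[\mathbf Z]=-\frac{1}{\ln N}\sum_{j=1}^N \frac{d_j}{|\mathcal E|}\ln\frac{d_j}{|\mathcal E|},$$ with the convention $0\ln 0=0$. *)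

From HB Require Import structures.
From mathcomp Require Import all_boot all_order all_algebra.
From mathcomp Require Import all_classical all_reals all_analysis.
Set Implicit Arguments. Unset Strict Implicit. Unset Printing Implicit Defensive.
Import Order.TTheory GRing.Theory Num.Theory.
Local Open Scope ring_scope.
Local Open Scope classical_set_scope.

(* A directed graph on N nodes: adjacency matrix Z : 'M[bool]_N, Z i j = edge (i,j). *)
Definition no_self_loops (N : nat) (Z : 'M[bool]_N) : Prop :=
  forall i : 'I_N, Z i i = false.

Definition indeg (N : nat) (Z : 'M[bool]_N) (j : 'I_N) : nat :=
  (\sum_(i < N) (Z i j : nat))%N.

Definition nedges (N : nat) (Z : 'M[bool]_N) : nat :=
  (\sum_(i < N) \sum_(j < N | i != j) (Z i j : nat))%N.

Definition xlnx (R : realType) (x : R) : R := if x == 0 then 0 else x * ln x.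

Definition graph_entropy (R : realType) (N : nat) (Z : 'M[bool]_N) : R :=
  - (ln (N%:R : R))^-1 *
    \sum_(j < N) xlnx ((indeg Z j)%:R / (nedges Z)%:R).

(* m(E): the minimum (infimum of a finite nonempty set) of the graph entropy
   over loop-free directed graphs on N nodes with exactly E edges. *)
Definition min_entropy (R : realType) (N E : nat) : R :=
  inf [set graph_entropy R Z | Z in [set Z : 'M[bool]_N | no_self_loops Z /\ nedges Z = E]].

(* Deleting an edge that enters a node of smallest positive in-degree never
   increases the graph entropy. With p the old and q the new in-degree
   distribution, q rescales every other coordinate of p up by |E|/(|E|-1),
   while the mass lost sits at the minimal positive coordinate p_j. Bounding
   x ln x below by its tangents, all tangent slopes can be replaced by the
   smallest one, ln p_j + 1, and the linear terms cancel since p and q have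
   the same total mass. Iterating the deletion, every graph with E+1 edges is
   dominated by one with E edges, hence m(E) <= m(E+1). *)
From mathcomp Require Import all_boot all_order all_algebra.
From mathcomp Require Import all_classical all_reals all_analysis.
From mathcomp Require Import ring lra.
Import Order.TTheory GRing.Theory Num.Theory.
Set Implicit Arguments. Unset Strict Implicit.
Local Open Scope ring_scope.

Section XlnxConvexity.
Variable R : realType.

Lemma ln_le_subr1 (x : R) : 0 < x -> ln x <= x - 1.
Proof.
move=> x_gt0; have := @le_ln1Dx R (x - 1).
by rewrite addrCA subrr addr0; apply; lra.
Qed.

Lemma xlnx_tangent (x y : R) : 0 < x -> 0 <= y ->
  xlnx x + (ln x + 1) * (y - x) <= xlnx y.
Proof.
move=> x_gt0 y_ge0; rewrite /xlnx (gt_eqF x_gt0).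
have [->|y_neq0] := eqVneq y 0; first by lra.
have y_gt0 : 0 < y by rewrite lt0r y_neq0.
have ln_xy : ln x - ln y <= x / y - 1.
  by rewrite -ln_div ?posrE //; exact/ln_le_subr1/divr_gt0.
have : y * (ln x - ln y) <= y * (x / y - 1) by rewrite ler_wpM2l // ltW.
have -> : y * (x / y - 1) = x - y by field; rewrite gt_eqF.
set lx := ln x; set ly := ln y; nra.
Qed.

Lemma sum_xlnx_le_rescale (n : nat) (p q : 'I_n -> R) (j : 'I_n) (c : R) :
  \sum_(i < n) p i = \sum_(i < n) q i ->
  (forall i, 0 <= p i) -> 0 < p j -> 0 <= q j -> 1 <= c ->
  (forall i, i != j -> q i = c * p i) ->
  (forall i, 0 < p i -> p j <= p i) ->
  \sum_(i < n) xlnx (p i) <= \sum_(i < n) xlnx (q i).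
Proof.
move=> sum_pq p_ge0 pj_gt0 qj_ge0 c_ge1 q_scaled pj_min.
suff tangent_j : forall i,
    xlnx (p i) + (ln (p j) + 1) * (q i - p i) <= xlnx (q i).
  apply: le_trans (ler_sum _ (fun i _ => tangent_j i)).
  by rewrite big_split /= -mulr_sumr sumrB sum_pq subrr mulr0 addr0.
move=> i; have [->|i_neq_j] := eqVneq i j; first exact: xlnx_tangent.
rewrite q_scaled //; have [pi_eq0|pi_neq0] := eqVneq (p i) 0.
  by rewrite pi_eq0 mulr0 subrr mulr0 addr0.
have pi_gt0 : 0 < p i by rewrite lt0r pi_neq0 p_ge0.
have cpi_ge_pi : p i <= c * p i by rewrite ler_peMl // ltW.
have cpi_ge0 : 0 <= c * p i := le_trans (ltW pi_gt0) cpi_ge_pi.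
apply: le_trans (xlnx_tangent pi_gt0 cpi_ge0).
rewrite lerD2l ler_wpM2r ?subr_ge0 // lerD2r ler_ln ?posrE //.
exact: pj_min.
Qed.

Lemma inv_ln_natr_ge0 (N : nat) : 0 <= (ln (N%:R : R))^-1.
Proof.
rewrite invr_ge0; have [->|N_gt0] := posnP N; first by rewrite ln0.
by rewrite ln_ge0 // ler1n.
Qed.

End XlnxConvexity.

Section Degrees.
Variables (N : nat) (Z : 'M[bool]_N).
Hypothesis Z_loopless : no_self_loops Z.

Lemma nedgesE : nedges Z = (\sum_(j < N) indeg Z j)%N.
Proof.
rewrite /nedges /indeg exchange_big /=; apply: eq_bigr => i _.
rewrite [RHS](bigD1 i) //= Z_loopless add0n.
by apply: eq_bigl => k; rewrite eq_sym.
Qed.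

Lemma indeg_le_nedges (j : 'I_N) : (indeg Z j <= nedges Z)%N.
Proof. by rewrite nedgesE (bigD1 j) //= leq_addr. Qed.

Lemma indeg_gt0P (j : 'I_N) : reflect (exists i, Z i j) (0 < indeg Z j)%N.
Proof.
apply: (iffP idP) => [|[i Zij]]; last by rewrite /indeg (bigD1 i) //= Zij.
case: (pickP (Z^~ j)) => [i Zij|Zj0]; first by exists i.
by rewrite /indeg big1 // => i _; rewrite Zj0.
Qed.

Lemma has_indeg_gt0 : (0 < nedges Z)%N -> exists j, (0 < indeg Z j)%N.
Proof.
rewrite nedgesE; case: (pickP (fun j => 0 < indeg Z j)%N) => [j|indeg0].
  by exists j.
by rewrite big1 // => j _; apply/eqP; rewrite -leqn0 leqNgt indeg0.
Qed.

Lemma graph_entropy_ge0 (R : realType) : (0 < nedges Z)%N ->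
  0 <= graph_entropy R Z.
Proof.
move=> nedges_gt0; rewrite /graph_entropy mulNr oppr_ge0.
apply: mulr_ge0_le0; first exact: inv_ln_natr_ge0.
apply: sumr_le0 => j _; rewrite /xlnx; case: ifP => // _.
apply: mulr_ge0_le0; first by rewrite divr_ge0.
by apply: ln_le0; rewrite ler_pdivrMr ?ltr0n // mul1r ler_nat indeg_le_nedges.
Qed.

End Degrees.

Definition remove_edge N (Z : 'M[bool]_N) (i j : 'I_N) : 'M[bool]_N :=
  \matrix_(k, l) (Z k l && ~~ ((k == i) && (l == j))).

Section RemoveEdge.
Variables (N : nat) (Z : 'M[bool]_N) (i j : 'I_N).
Hypotheses (Z_loopless : no_self_loops Z) (Zij : Z i j).

Lemma remove_edge_loopless : no_self_loops (remove_edge Z i j).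
Proof. by move=> k; rewrite mxE Z_loopless. Qed.

Lemma indeg_remove_edge : indeg (remove_edge Z i j) j = (indeg Z j).-1.
Proof.
rewrite /indeg [in RHS](bigD1 i) //= [in LHS](bigD1 i) //= Zij mxE !eqxx.
rewrite andbF add0n; apply: eq_bigr => k k_neq_i.
by rewrite mxE (negbTE k_neq_i) andbT.
Qed.

Lemma indeg_remove_edge_neq (l : 'I_N) : l != j ->
  indeg (remove_edge Z i j) l = indeg Z l.
Proof.
by move=> l_neq_j; rewrite /indeg; apply: eq_bigr => k _;
  rewrite mxE (negbTE l_neq_j) andbF andbT.
Qed.

Lemma nedges_remove_edge : nedges (remove_edge Z i j) = (nedges Z).-1.
Proof.
rewrite (nedgesE remove_edge_loopless) (nedgesE Z_loopless).
rewrite (bigD1 j) //= [in RHS](bigD1 j) //=.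
rewrite indeg_remove_edge (eq_bigr _ indeg_remove_edge_neq).
by have /indeg_gt0P/prednK <- : exists k, Z k j by exists i.
Qed.

End RemoveEdge.

Lemma graph_entropy_remove_edge (R : realType) N (Z : 'M[bool]_N) (i j : 'I_N) :
  no_self_loops Z -> Z i j -> (2 <= nedges Z)%N ->
  (forall l, (0 < indeg Z l)%N -> (indeg Z j <= indeg Z l)%N) ->
  graph_entropy R (remove_edge Z i j) <= graph_entropy R Z.
Proof.
move=> Z_loopless Zij nedges_ge2 j_min.
rewrite /graph_entropy !mulNr lerN2 ler_wpM2l ?inv_ln_natr_ge0 //.
rewrite nedges_remove_edge //.
have E_gt0 : (0 : R) < (nedges Z)%:R by rewrite ltr0n (ltn_trans _ nedges_ge2).
have E1_gt0 : (0 : R) < (nedges Z).-1%:R.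
  by rewrite ltr0n -ltnS prednK ?(ltnW nedges_ge2).
have indegj_gt0 : (0 < indeg Z j)%N by apply/indeg_gt0P; exists i.
apply: (@sum_xlnx_le_rescale R N _ _ j ((nedges Z)%:R / (nedges Z).-1%:R)).
- rewrite -!mulr_suml -!natr_sum -(nedgesE Z_loopless).
  rewrite -(nedgesE (remove_edge_loopless i j Z_loopless)).
  by rewrite nedges_remove_edge // !divff // gt_eqF.
- by move=> l; rewrite divr_ge0.
- by rewrite divr_gt0 // ltr0n.
- by rewrite divr_ge0.
- by rewrite ler_pdivlMr // mul1r ler_nat leq_pred.
- move=> l l_neq_j; rewrite indeg_remove_edge_neq //.
  by field; rewrite !gt_eqF.
- move=> l; rewrite pmulr_lgt0 ?invr_gt0 // ltr0n => indegl_gt0.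
  by rewrite ler_wpM2r ?invr_ge0 // ler_nat j_min.
Qed.

Lemma graph_entropy_pred_nedges (R : realType) N (Z : 'M[bool]_N) :
  no_self_loops Z -> (2 <= nedges Z)%N ->
  exists2 Z' : 'M[bool]_N, no_self_loops Z' /\ nedges Z' = (nedges Z).-1 &
    graph_entropy R Z' <= graph_entropy R Z.
Proof.
move=> Z_loopless nedges_ge2.
have [j0 indegj0_gt0] := has_indeg_gt0 Z_loopless (ltnW nedges_ge2).
case: (@arg_minnP _ j0 (fun l => 0 < indeg Z l)%N (indeg Z) indegj0_gt0).
move=> j /indeg_gt0P [i Zij] j_min; exists (remove_edge Z i j).
  by split; [exact: remove_edge_loopless | exact: nedges_remove_edge].
exact: graph_entropy_remove_edge.
Qed.

Lemma exists_graph_nedges N E : (E <= N * (N - 1))%N ->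
  exists Z : 'M[bool]_N, no_self_loops Z /\ nedges Z = E.
Proof.
pose K : 'M[bool]_N := \matrix_(i, j) (i != j).
have K_loopless : no_self_loops K by move=> i; rewrite mxE eqxx.
have nedgesK : nedges K = (N * (N - 1))%N.
  rewrite /nedges (eq_bigr (fun _ => N - 1)%N) ?sum_nat_const ?card_ord // => i _.
  rewrite (eq_bigr (fun _ => 1%N)) => [|j ij]; last by rewrite mxE ij.
  rewrite sum1_card (eq_card (B := predC1 i)) ?cardC1 ?card_ord ?subn1 //.
  by move=> j; rewrite !inE eq_sym.
rewrite -nedgesK => E_le.
suff remove_d : forall d, (d <= nedges K)%N ->
    exists Z : 'M[bool]_N, no_self_loops Z /\ nedges Z = (nedges K - d)%N.
  by have [Z] := remove_d _ (leq_subr E (nedges K)); rewrite subKn //; exists Z.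
elim=> [|d IH] d_lt; first by exists K; rewrite subn0.
have [Z [Z_loopless nedgesZ]] := IH (ltnW d_lt).
have /(has_indeg_gt0 Z_loopless) [j /indeg_gt0P [i Zij]] : (0 < nedges Z)%N.
  by rewrite nedgesZ subn_gt0.
exists (remove_edge Z i j); split; first exact: remove_edge_loopless.
by rewrite nedges_remove_edge // nedgesZ subnS.
Qed.

Lemma inf_le_inf_dominated (R : realType) (A B : set R) :
  has_lbound A -> (B !=set0)%classic ->
  (forall b, B b -> exists2 a, A a & a <= b) -> inf A <= inf B.
Proof.
move=> A_lb B_neq0 B_dominated; apply: lb_le_inf => // b /B_dominated [a Aa ab].
exact: le_trans (ge_inf A_lb Aa) ab.
Qed.

Lemma min_entropy_le_succ (R : realType) N E : (1 <= E)%N ->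
  (E.+1 <= N * (N - 1))%N -> min_entropy R N E <= min_entropy R N E.+1.
Proof.
move=> E_gt0 E_le; apply: inf_le_inf_dominated.
- exists 0 => _ [Z [Z_loopless nedgesZ] <-].
  by apply: graph_entropy_ge0; rewrite ?nedgesZ.
- have [Z Z_ok] := exists_graph_nedges E_le.
  by exists (graph_entropy R Z), Z.
- move=> _ [Z [Z_loopless nedgesZ] <-].
  have [|Z' [Z'_loopless nedgesZ'] Z'_le] :=
    graph_entropy_pred_nedges R Z_loopless; first by rewrite nedgesZ.
  exists (graph_entropy R Z') => //.
  by exists Z' => //; split; rewrite ?nedgesZ' ?nedgesZ.
Qed.

Theorem corollary1 (R : realType) (N E1 E2 : nat) :
  (2 <= N)%N -> (1 <= E1)%N -> (E1 <= E2)%N -> (E2 <= N * (N - 1))%N ->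
  min_entropy R N E1 <= min_entropy R N E2.
Proof.
move=> _ E1_gt0 E12 E2_le.
pose admissible := [pred E | 1 <= E <= N * (N - 1)]%N.
apply: (@homo_leq_in _ admissible (min_entropy R N) (fun x y => x <= y)) => //.
- exact: le_trans.
- move=> a b /andP [a_gt0 _] /andP [_ b_le] k /andP [ak kb].
  by rewrite inE (leq_trans a_gt0 (ltnW ak)) (ltnW (leq_trans kb b_le)).
- by move=> E /andP [E_gt0 _] /andP [_ E_le]; exact: min_entropy_le_succ.
- by rewrite inE E1_gt0 (leq_trans E12 E2_le).
- by rewrite inE (leq_trans E1_gt0 E12).
Qed.
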